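(* For every $n\in\mathbb{N}$: \begin{align*} \sum_{j=0}^{n}\sum_{i=0}^{j}\frac{\binom{2n+2}{i}}{\binom{2n+1}{j}}&=(n+1)\sum_{k=0}^{n}\frac{1}{2k+1}=(n+1)\Big(H_{2n+1}-\frac{H_n}{2}\Big),\\ \sum_{j=0}^{n}\sum_{i=0}^{j}\frac{\binom{2n+3}{i}}{\binom{2n+1}{j}}&=(n+1)H_{n+1},\\ \sum_{j=0}^{n}\sum_{i=0}^{j}\frac{\binom{2n+1}{i}}{\binom{2n}{j}}&=\frac{2^{2n-1}}{\binom{2n}{n}}+\Big(n+\frac12\Big)\Big(H_{2n+1}-\frac{H_n}{2}\Big),\\ \sum_{j=0}^{n}\sum_{i=0}^{j}\frac{\binom{2n+2}{i}}{\binom{2n}{j}}&=\frac{2^{2n}}{\binom{2n}{n}}+\Big(n+\frac12\Big)H_n. \end{align*}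
   Context: $H_n=\sum_{k=1}^{n}\frac1k$ is the $n$-th harmonic number ($H_0=0$). *)

From HB Require Import structures.
From mathcomp Require Import all_boot all_order all_algebra.
Set Implicit Arguments. Unset Strict Implicit. Unset Printing Implicit Defensive.
Import Order.TTheory GRing.Theory Num.Theory.
Local Open Scope ring_scope.

Definition harmonic (n : nat) : rat := \sum_(1 <= k < n.+1) (k%:R)^-1.

Definition dsum (n a b : nat) : rat :=
  \sum_(0 <= j < n.+1) \sum_(0 <= i < j.+1) ('C(a, i))%:R / ('C(b, j))%:R.

From HB Require Import structures.
From mathcomp Require Import all_boot all_order all_algebra.
From mathcomp Require Import ring lra zify.
Import Order.TTheory GRing.Theory Num.Theory.

(* Write T_a(j) for the partial binomial sum \sum_(i <= j) 'C(a, i), so that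
   dsum n a b = \sum_(j <= n) T_a(j) / 'C(b, j).  Pascal's rule gives
   T_(b+1)(j) = 2 T_b(j) - 'C(b, j), which reduces dsum n (b+1) b and
   dsum n (b+2) b to the diagonal sum dsum n b b; in the second case the ratios
   'C(b+1, j) / 'C(b, j) = (b+1) / (b+1-j) produce the harmonic terms.  The
   diagonal sums obey
     (b+1) dsum m (b+1) (b+1) = (b+2) dsum m b b - (m+1) T_b(m) / 'C(b, m),
   and by symmetry of the binomial coefficients T_(2n+1)(n) = 2^(2n); stepping
   b = 2n -> 2n+1 -> 2n+2 along the recurrence then gives closed forms for
   dsum n (2n) (2n) and dsum n (2n+1) (2n+1) by induction on n. *)

Set Implicit Arguments.
Unset Strict Implicit.
Unset Printing Implicit Defensive.

Local Open Scope ring_scope.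

Local Ltac neq0_by_lra := repeat (apply/andP; split); apply/lt0r_neq0; lra.

Definition binsum (a j : nat) : nat := \sum_(0 <= i < j.+1) 'C(a, i).

Lemma binsum0 a : binsum a 0 = 1%N.
Proof. by rewrite /binsum big_nat1 bin0. Qed.

Lemma binsum_recr a j : binsum a j.+1 = (binsum a j + 'C(a, j.+1))%N.
Proof. by rewrite /binsum big_nat_recr. Qed.

Lemma binsumS a j : binsum a.+1 j.+1 = (binsum a j.+1 + binsum a j)%N.
Proof.
elim: j => [|j IHj]; first by rewrite !binsum_recr !binsum0 binS bin0.
by rewrite binsum_recr IHj binS !binsum_recr; lia.
Qed.

Lemma binsum_double a j : (binsum a.+1 j + 'C(a, j) = 2 * binsum a j)%N.
Proof.
case: j => [|j]; first by rewrite !binsum0 bin0.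
by rewrite binsumS binsum_recr; lia.
Qed.

Lemma bin_odd_sym n : 'C((2 * n).+1, n.+1) = 'C((2 * n).+1, n).
Proof. by rewrite -bin_sub; [congr 'C(_, _); lia | lia]. Qed.

Lemma binsum_mid n : binsum (2 * n).+1 n = (2 ^ (2 * n))%N.
Proof.
elim: n => [|n IHn]; first by rewrite binsum0.
have -> : (2 * n.+1).+1 = (2 * n).+3 by lia.
have -> : (2 ^ (2 * n.+1) = 4 * 2 ^ (2 * n))%N by rewrite mulnS expnD.
rewrite binsumS.
have := binsum_double (2 * n).+1 n.+1; have := binsum_double (2 * n).+1 n.
by rewrite (binsum_recr (2 * n).+1) bin_odd_sym; lia.
Qed.

Lemma natr_bin_down {R : numFieldType} n m : (m <= n)%N ->
  ('C(n.+1, m))%:R = (n.+1)%:R / (n.+1 - m)%:R * ('C(n, m))%:R :> R.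
Proof.
move=> le_mn; have nz : (n.+1 - m)%:R != 0 :> R.
  by rewrite pnatr_eq0 subn_eq0 -ltnNge ltnS.
have := congr1 (fun k => k%:R : R) (mul_bin_down n.+1 m).
by rewrite /= !natrM => E; apply: (mulfI nz); rewrite -E; field.
Qed.

Lemma natr_bin_left {R : numFieldType} n m : (m < n)%N ->
  ('C(n, m))%:R = (m.+1)%:R / (n - m)%:R * ('C(n, m.+1))%:R :> R.
Proof.
move=> lt_mn; have nz : (n - m)%:R != 0 :> R by rewrite pnatr_eq0 subn_eq0 -ltnNge.
have := congr1 (fun k => k%:R : R) (mul_bin_left n m).
by rewrite /= !natrM => E; apply: (mulfI nz); rewrite -E; field.
Qed.

Lemma natr_binsumS {R : pzRingType} a j :
  (binsum a.+1 j)%:R = 2 * (binsum a j)%:R - ('C(a, j))%:R :> R.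
Proof.
have := congr1 (fun k => k%:R : R) (binsum_double a j).
by rewrite /= natrD natrM => <-; rewrite addrK.
Qed.

Lemma natr_bin_gt0 {R : numDomainType} n m : (m <= n)%N -> 0 < ('C(n, m))%:R :> R.
Proof. by rewrite ltr0n bin_gt0. Qed.

Lemma natr_bin_neq0 {R : numDomainType} n m : (m <= n)%N -> ('C(n, m))%:R != 0 :> R.
Proof. by move/natr_bin_gt0/lt0r_neq0. Qed.

Definition binratio (b j : nat) : rat := (binsum b j)%:R / ('C(b, j))%:R.

Lemma binratio_rec b k : (k < b)%N ->
  (b.+1)%:R * binratio b.+1 k.+1
  = (b - k)%:R * binratio b k.+1 + (k.+1)%:R * binratio b k.
Proof.
move=> lt_kb; rewrite /binratio binsumS natrD.
rewrite (natr_bin_down lt_kb) (natr_bin_left lt_kb) subSS.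
field.
by rewrite natr_bin_neq0 // !nat1r !pnatr_eq0 subn_eq0 -ltnNge lt_kb.
Qed.

Lemma dsum0 a b : dsum 0 a b = 1.
Proof. by rewrite /dsum !big_nat1 !bin0 divr1. Qed.

Lemma dsumS n a b :
  dsum n.+1 a b = dsum n a b + (binsum a n.+1)%:R / ('C(b, n.+1))%:R.
Proof. by rewrite /dsum big_nat_recr //= -mulr_suml natr_sum. Qed.

Lemma dsum_diag_rec m b : (m <= b)%N ->
  (b.+1)%:R * dsum m b.+1 b.+1 = (b.+2)%:R * dsum m b b - (m.+1)%:R * binratio b m.
Proof.
elim: m => [|m IHm] le_mb.
  by rewrite !dsum0 /binratio binsum0 bin0; field.
have le_mb' := ltnW le_mb.
rewrite !dsumS -/(binratio b.+1 m.+1) -/(binratio b m.+1) mulrDr (IHm le_mb').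
by rewrite binratio_rec // (natrB _ le_mb'); ring.
Qed.

Lemma harmonicS k : harmonic k.+1 = harmonic k + (k.+1)%:R^-1.
Proof. by rewrite /harmonic big_nat_recr. Qed.

Lemma dsum_shift1 n b : (n <= b)%N -> dsum n b.+1 b = 2 * dsum n b b - (n.+1)%:R.
Proof.
elim: n => [|n IHn] le_nb; first by rewrite !dsum0; ring.
rewrite !dsumS (IHn (ltnW le_nb)) natr_binsumS.
by field; rewrite natr_bin_neq0.
Qed.

Lemma dsum_shift2 n b : (n <= b)%N ->
  dsum n b.+2 b
  = 4 * dsum n b b - 2 * (n.+1)%:R - (b.+1)%:R * (harmonic b.+1 - harmonic (b - n)).
Proof.
elim: n => [|n IHn] le_nb.
  by rewrite !dsum0 subn0 harmonicS; field; rewrite nat1r pnatr_eq0.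
rewrite !dsumS (IHn (ltnW le_nb)) !natr_binsumS (natr_bin_down le_nb) subSS.
have -> : harmonic (b - n) = harmonic (b - n.+1) + ((b - n)%:R)^-1.
  by rewrite -(subnSK le_nb) harmonicS.
field.
by rewrite natr_bin_neq0 // pnatr_eq0 subn_eq0 -ltnNge le_nb.
Qed.

Definition oddharm (n : nat) : rat := \sum_(0 <= k < n.+1) ((2 * k + 1)%:R)^-1.

Lemma oddharmS n : oddharm n.+1 = oddharm n + ((2 * n.+1 + 1)%:R)^-1.
Proof. by rewrite /oddharm big_nat_recr. Qed.

Lemma oddharm_harmonic n : oddharm n = harmonic (2 * n).+1 - harmonic n / 2.
Proof.
elim: n => [|n IHn].
  by rewrite /oddharm /harmonic big_nat1 big_nat1 big_geq //; field.
rewrite oddharmS IHn (_ : 2 * n.+1 = (2 * n).+2)%N; last by lia.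
have n_ge0 := ler0n rat n.
by rewrite !harmonicS; field; neq0_by_lra.
Qed.

Lemma natr_bin_mid_odd {R : numFieldType} n :
  ('C((2 * n).+1, n))%:R = ((2 * n).+1)%:R / (n.+1)%:R * ('C(2 * n, n))%:R :> R.
Proof.
rewrite natr_bin_down; last by lia.
by rewrite (_ : (2 * n).+1 - n = n.+1)%N //; lia.
Qed.

Lemma natr_bin_mid_even {R : numFieldType} n :
  ('C(2 * n.+1, n.+1))%:R
  = 2 * ((2 * n).+1)%:R / (n.+1)%:R * ('C(2 * n, n))%:R :> R.
Proof.
rewrite (_ : 2 * n.+1 = (2 * n).+2)%N; last by lia.
rewrite binS bin_odd_sym natrD natr_bin_mid_odd -!mulrA -mulr2n.
exact/esym/mulr_natl.
Qed.

Lemma natr_bin_mid_gt0 n : 0 < ('C(2 * n, n))%:R :> rat.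
Proof. by apply: natr_bin_gt0; lia. Qed.

Lemma binratio_mid_odd n :
  binratio (2 * n).+1 n
  = 2 ^+ (2 * n) * (n.+1)%:R / ((2 * n).+1)%:R / ('C(2 * n, n))%:R.
Proof.
have n_ge0 := ler0n rat n; have c_gt0 := natr_bin_mid_gt0 n.
by rewrite /binratio binsum_mid natrX natr_bin_mid_odd; field; neq0_by_lra.
Qed.

Lemma binratio_mid_even n :
  binratio (2 * n) n = (2 ^+ (2 * n) + ('C(2 * n, n))%:R) / (2 * ('C(2 * n, n))%:R).
Proof.
have c_gt0 := natr_bin_mid_gt0 n.
have -> : 2 ^+ (2 * n) = 2 * (binsum (2 * n) n)%:R - ('C(2 * n, n))%:R :> rat.
  by rewrite -natr_binsumS binsum_mid natrX.
by rewrite /binratio; field; neq0_by_lra.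
Qed.

(* The odd half of the joint induction proving [dsum_diag_even] and [dsum_diag_odd]. *)
Lemma dsum_diag_odd_of_even n :
  dsum n (2 * n) (2 * n)
    = 2 ^+ (2 * n) / (4 * ('C(2 * n, n))%:R) + (n.+1)%:R / 2
      + ((2 * n).+1)%:R / 4 * oddharm n ->
  dsum n (2 * n).+1 (2 * n).+1 = (n.+1)%:R / 2 * (1 + oddharm n).
Proof.
move=> even_n; have n_ge0 := ler0n rat n; have c_gt0 := natr_bin_mid_gt0 n.
have -> : dsum n (2 * n).+1 (2 * n).+1 = (((2 * n).+2)%:R * dsum n (2 * n) (2 * n)
    - (n.+1)%:R * binratio (2 * n) n) / ((2 * n).+1)%:R.
  by rewrite -dsum_diag_rec; [field; neq0_by_lra | lia].
by rewrite even_n binratio_mid_even; field; neq0_by_lra.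
Qed.

Lemma dsum_diag_even n :
  dsum n (2 * n) (2 * n)
  = 2 ^+ (2 * n) / (4 * ('C(2 * n, n))%:R) + (n.+1)%:R / 2
    + ((2 * n).+1)%:R / 4 * oddharm n.
Proof.
elim: n => [|n IHn].
  by rewrite dsum0 /oddharm big_nat1 bin0; field.
have n_ge0 := ler0n rat n; have c_gt0 := natr_bin_mid_gt0 n.
rewrite dsumS -/(binratio _ _) binratio_mid_even natr_bin_mid_even oddharmS.
rewrite (_ : 2 * n.+1 = (2 * n).+2)%N; last by lia.
have -> : dsum n (2 * n).+2 (2 * n).+2 = (((2 * n).+3)%:R * dsum n (2 * n).+1 (2 * n).+1
    - (n.+1)%:R * binratio (2 * n).+1 n) / ((2 * n).+2)%:R.
  by rewrite -dsum_diag_rec; [field; neq0_by_lra | lia].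
rewrite (dsum_diag_odd_of_even IHn) binratio_mid_odd !exprS.
by field; neq0_by_lra.
Qed.

Lemma dsum_diag_odd n : dsum n (2 * n).+1 (2 * n).+1 = (n.+1)%:R / 2 * (1 + oddharm n).
Proof. exact/dsum_diag_odd_of_even/dsum_diag_even. Qed.

Lemma dsum_odd_shift1 n : dsum n (2 * n).+2 (2 * n).+1 = (n.+1)%:R * oddharm n.
Proof. by rewrite dsum_shift1 ?dsum_diag_odd; [field | lia]. Qed.

Lemma dsum_odd_shift2 n : dsum n (2 * n).+3 (2 * n).+1 = (n.+1)%:R * harmonic n.+1.
Proof.
have n_ge0 := ler0n rat n.
rewrite dsum_shift2; last by lia.
rewrite dsum_diag_odd (_ : (2 * n).+1 - n = n.+1)%N; last by lia.
have -> : oddharm n = harmonic (2 * n).+2 - harmonic n.+1 / 2.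
  by rewrite oddharm_harmonic !harmonicS; field; neq0_by_lra.
by field.
Qed.

Lemma dsum_even_shift1 n :
  dsum n (2 * n).+1 (2 * n)
  = 2 ^+ (2 * n) / 2 / ('C(2 * n, n))%:R + (n%:R + 1 / 2) * oddharm n.
Proof.
have c_gt0 := natr_bin_mid_gt0 n.
by rewrite dsum_shift1 ?dsum_diag_even; [field; neq0_by_lra | lia].
Qed.

Lemma dsum_even_shift2 n :
  dsum n (2 * n).+2 (2 * n)
  = 2 ^+ (2 * n) / ('C(2 * n, n))%:R + (n%:R + 1 / 2) * harmonic n.
Proof.
have c_gt0 := natr_bin_mid_gt0 n.
rewrite dsum_shift2; last by lia.
rewrite dsum_diag_even (_ : 2 * n - n = n)%N; last by lia.
have -> : harmonic (2 * n).+1 = oddharm n + harmonic n / 2.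
  by rewrite oddharm_harmonic; ring.
by field; neq0_by_lra.
Qed.

Theorem corollary2 (n : nat) :
  [/\ dsum n (2 * n + 2) (2 * n + 1)
        = (n.+1)%:R * \sum_(0 <= k < n.+1) ((2 * k + 1)%:R)^-1
      /\ (n.+1)%:R * \sum_(0 <= k < n.+1) ((2 * k + 1)%:R)^-1
        = (n.+1)%:R * (harmonic (2 * n + 1) - harmonic n / 2),
      dsum n (2 * n + 3) (2 * n + 1) = (n.+1)%:R * harmonic n.+1,
      dsum n (2 * n + 1) (2 * n)
        = (2 ^+ (2 * n) / 2) / ('C(2 * n, n))%:R
          + (n%:R + 1 / 2) * (harmonic (2 * n + 1) - harmonic n / 2)
    & dsum n (2 * n + 2) (2 * n)
        = 2 ^+ (2 * n) / ('C(2 * n, n))%:R + (n%:R + 1 / 2) * harmonic n].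
Proof.
rewrite -/(oddharm n) !addn1 !addn2 !addn3 -oddharm_harmonic.
split; first split=> //.
- exact: dsum_odd_shift1.
- exact: dsum_odd_shift2.
- exact: dsum_even_shift1.
- exact: dsum_even_shift2.
Qed.
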